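(* Let $E/\mathbb{Q}$ be given by the model $y^2=x^3+Ax+B$ ($A,B\in\mathbb{Z}$) described in the context and $X=\max\{|A|^3,|B|^2\}$. Let $P,Q\in E(\mathbb{Q})$ satisfy $X^{1/6}\le x(P)<x(Q)$ and $x(P)=x_1/s$, $x(Q)=x_2/s$ with $x_1,x_2\in\mathbb{Z}$ and $s$ a positive integer. Then $h(P+Q)\le h(P)+2h(Q)+3h(s)+2.9$.
   Context: The model is obtained from a global minimal Weierstrass equation of $E$ by the substitution $x\mapsto \frac{1}{36}(x-3b_2)$, $y\mapsto \frac12(\frac{y}{108}-\frac{a_1}{36}(x-3b_2)-a_3)$. $h$ is the absolute logarithmic Weil height (so $h(s)=\log s$) and $h(P)=h(x(P))$. *)

From Stdlib Require Import ZArith QArith Qreduction Reals.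
Open Scope Z_scope.

(** Weierstrass invariants of a general (long) Weierstrass equation
    y^2 + a1 xy + a3 y = x^3 + a2 x^2 + a4 x + a6 with integer coefficients. *)
Definition wb2 (a1 a2 a3 a4 a6 : Z) : Z := a1^2 + 4*a2.
Definition wb4 (a1 a2 a3 a4 a6 : Z) : Z := 2*a4 + a1*a3.
Definition wb6 (a1 a2 a3 a4 a6 : Z) : Z := a3^2 + 4*a6.
Definition wb8 (a1 a2 a3 a4 a6 : Z) : Z :=
  a1^2*a6 + 4*a2*a6 - a1*a3*a4 + a2*a3^2 - a4^2.
Definition wc4 (a1 a2 a3 a4 a6 : Z) : Z :=
  let b2 := wb2 a1 a2 a3 a4 a6 in let b4 := wb4 a1 a2 a3 a4 a6 in
  b2^2 - 24*b4.
Definition wc6 (a1 a2 a3 a4 a6 : Z) : Z :=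
  let b2 := wb2 a1 a2 a3 a4 a6 in let b4 := wb4 a1 a2 a3 a4 a6 in
  let b6 := wb6 a1 a2 a3 a4 a6 in
  - b2^3 + 36*b2*b4 - 216*b6.
Definition wdisc (a1 a2 a3 a4 a6 : Z) : Z :=
  let b2 := wb2 a1 a2 a3 a4 a6 in let b4 := wb4 a1 a2 a3 a4 a6 in
  let b6 := wb6 a1 a2 a3 a4 a6 in let b8 := wb8 a1 a2 a3 a4 a6 in
  - b2^2*b8 - 8*b4^3 - 27*b6^2 + 9*b2*b4*b6.

(** The standard change of variables x = u^2 x' + r, y = u^3 y' + s u^2 x' + t
    takes the equation with coefficients a_i to the one with coefficients a_i'. *)
Definition wiso (a1 a2 a3 a4 a6 a1' a2' a3' a4' a6' : Z) (u r s t : Q) : Prop :=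
  ~ (u == 0)%Q /\
  (u * inject_Z a1' == inject_Z a1 + 2*s)%Q /\
  (u^2 * inject_Z a2' == inject_Z a2 - s * inject_Z a1 + 3*r - s^2)%Q /\
  (u^3 * inject_Z a3' == inject_Z a3 + r * inject_Z a1 + 2*t)%Q /\
  (u^4 * inject_Z a4' == inject_Z a4 - s * inject_Z a3 + 2*r*inject_Z a2
                         - (t + r*s) * inject_Z a1 + 3*r^2 - 2*s*t)%Q /\
  (u^6 * inject_Z a6' == inject_Z a6 + r * inject_Z a4 + r^2 * inject_Z a2 + r^3
                         - t * inject_Z a3 - t^2 - r*t*inject_Z a1)%Q.

Definition global_minimal (a1 a2 a3 a4 a6 : Z) : Prop :=
  wdisc a1 a2 a3 a4 a6 <> 0 /\
  forall (a1' a2' a3' a4' a6' : Z) (u r s t : Q),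
    wiso a1 a2 a3 a4 a6 a1' a2' a3' a4' a6' u r s t ->
    Z.abs (wdisc a1 a2 a3 a4 a6) <= Z.abs (wdisc a1' a2' a3' a4' a6').

(** The short model obtained by x |-> (x - 3 b2)/36,
    y |-> (y/108 - a1 (x - 3 b2)/36 - a3)/2 is y^2 = x^3 - 27 c4 x - 54 c6. *)
Definition shortA (a1 a2 a3 a4 a6 : Z) : Z := -27 * wc4 a1 a2 a3 a4 a6.
Definition shortB (a1 a2 a3 a4 a6 : Z) : Z := -54 * wc6 a1 a2 a3 a4 a6.

Inductive pt : Type := Inf | Aff (x y : Q).

Definition on_curve (A B : Z) (P : pt) : Prop :=
  match P with
  | Inf => True
  | Aff x y => (y^2 == x^3 + inject_Z A * x + inject_Z B)%Q
  end.

Definition pt_add (A : Z) (P Q : pt) : pt :=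
  match P, Q with
  | Inf, _ => Q
  | _, Inf => P
  | Aff x1 y1, Aff x2 y2 =>
      if Qeq_bool x1 x2 then
        if Qeq_bool y1 (- y2) then Inf
        else let l := ((3 * x1^2 + inject_Z A) / (2 * y1))%Q in
             let x3 := (l^2 - x1 - x2)%Q in
             Aff x3 (l * (x1 - x3) - y1)%Q
      else let l := ((y2 - y1) / (x2 - x1))%Q in
           let x3 := (l^2 - x1 - x2)%Q in
           Aff x3 (l * (x1 - x3) - y1)%Q
  end.

Definition hQ (q : Q) : R :=
  let q' := Qred q in
  ln (IZR (Z.max (Z.abs (Qnum q')) (Zpos (Qden q')))).

Definition hpt (P : pt) : R :=
  match P with Inf => 0%R | Aff x _ => hQ x end.

Definition xcoord (P : pt) : Q := match P with Inf => 0%Q | Aff x _ => x end.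

From Stdlib Require Import ZArith QArith Reals.
From Stdlib Require Import Qreduction Qcanon Qreals Lia Lra Psatz.

(* The chord through P and Q gives
   x(P+Q) = N/D with D = s (x2 - x1)^2 and
   N = (x1 x2 + A s^2)(x1 + x2) + 2 B s^3 - 2 y(P) y(Q) s^3,
   and the last term is an integer because its square is the integer F(x1) F(x2),
   F being the homogenised cubic.  The hypothesis x(P) >= X^(1/6) means
   |A| <= x(P)^2 and |B| <= x(P)^3, which gives |N| <= 12 s^3 x(P) x(Q)^2,
   while D <= s^3 x(Q)^2; both are at most 12 s^3 H(P) H(Q)^2, and
   ln 12 < 2.9. *)

Definition qheight (q : Q) : Z :=
  Z.max (Z.abs (Qnum (Qred q))) (QDen (Qred q)).

Lemma hQ_qheight (q : Q) : hQ q = ln (IZR (qheight q)).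
Proof. reflexivity. Qed.

Lemma Qred_coprime (q : Q) : Z.gcd (Qnum (Qred q)) (QDen (Qred q)) = 1%Z.
Proof. exact (Qred_identity2 _ (Qred_involutive q)). Qed.

Lemma Qred_cross (q : Q) (N D : Z) :
  q * inject_Z D == inject_Z N -> (Qnum (Qred q) * D = N * QDen (Qred q))%Z.
Proof.
  intros Hq.
  assert (Hr : Qred q * inject_Z D == inject_Z N) by now rewrite Qred_correct.
  destruct (Qred q) as [a b]; unfold Qeq in Hr; simpl in *.
  rewrite Pos.mul_1_r in Hr; lia.
Qed.

Lemma qheight_le_frac (q : Q) (N D : Z) :
  (0 < D)%Z -> q * inject_Z D == inject_Z N -> (qheight q <= Z.max (Z.abs N) D)%Z.
Proof.
  intros HD Hq.
  pose proof (Qred_cross q N D Hq) as E; pose proof (Qred_coprime q) as G.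
  unfold qheight; destruct (Qred q) as [a b]; simpl in *.
  assert (Hb : (Zpos b | D)%Z).
  { apply Z.gauss with a; [exists N; lia | now rewrite Z.gcd_comm]. }
  destruct Hb as [k ->].
  assert (N = a * k)%Z as -> by (apply Z.mul_reg_r with (Zpos b); lia).
  assert (Hk : (0 < k)%Z) by nia.
  rewrite Z.abs_mul, (Z.abs_eq k) by lia; nia.
Qed.

Lemma one_le_qheight (q : Q) : (1 <= qheight q)%Z.
Proof. unfold qheight; lia. Qed.

Lemma Qsquare_integral (q : Q) (n : Z) :
  q * q == inject_Z n -> exists m : Z, q == inject_Z m.
Proof.
  intros Hq.
  assert (Hr : Qred q * Qred q == inject_Z n) by now rewrite Qred_correct.
  pose proof (Qred_coprime q) as G.
  enough (exists m : Z, Qred q == inject_Z m) as [m Hm]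
    by (exists m; now rewrite <- Hm, Qred_correct).
  destruct (Qred q) as [a b]; unfold Qeq in Hr; simpl in *.
  assert (Hba : (Zpos b | a)%Z).
  { apply Z.gauss with a; [exists (n * Zpos b)%Z; lia | now rewrite Z.gcd_comm]. }
  assert (Hb1 : (Zpos b | 1)%Z)
    by (rewrite <- G; apply Z.gcd_greatest; [exact Hba | apply Z.divide_refl]).
  apply Z.divide_1_r_nonneg in Hb1; [| lia].
  exists a; unfold Qeq; simpl; lia.
Qed.

Open Scope R_scope.

Lemma Q2R_inject_Z (z : Z) : Q2R (inject_Z z) = IZR z.
Proof. unfold Q2R; simpl; field. Qed.

Lemma Rabs_le_qheight (q : Q) : Rabs (Q2R q) <= IZR (qheight q).
Proof.
  rewrite <- (Qeq_eqR _ _ (Qred_correct q)).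
  unfold qheight, Q2R; destruct (Qred q) as [a b]; simpl.
  assert (Hb : 1 <= IZR (Zpos b)) by (apply IZR_le; lia).
  rewrite Rabs_mult, Rabs_inv, (Rabs_pos_eq (IZR (Zpos b))) by lra.
  apply Rle_trans with (Rabs (IZR a)).
  - rewrite <- (Rmult_1_r (Rabs (IZR a))) at 2.
    apply Rmult_le_compat_l; [apply Rabs_pos |].
    rewrite <- Rinv_1; apply Rinv_le_contravar; lra.
  - rewrite Rabs_Zabs; apply IZR_le, Z.le_max_l.
Qed.

Lemma Q2R_sqr (q : Q) : Q2R (q ^ 2) = Q2R q ^ 2.
Proof. rewrite RMicromega.Q2RpowerRZ by (right; discriminate); simpl; ring. Qed.

Lemma Rabs_le_inv (x a : R) : Rabs x <= a -> - a <= x <= a.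
Proof. unfold Rabs; destruct (Rcase_abs x); lra. Qed.

Lemma ln_le (x y : R) : 0 < x -> x <= y -> ln x <= ln y.
Proof.
  intros Hx [Hxy | <-]; [left; now apply ln_increasing | now right].
Qed.

Lemma ln_12_lt : ln 12 < 29/10.
Proof.
  assert (E : exp (29/10) = exp (29/100) ^ 10).
  { rewrite <- Rpower_pow by apply exp_pos.
    unfold Rpower; rewrite ln_exp; f_equal; simpl; lra. }
  assert (H : 1 + 29/100 <= exp (29/100)) by apply exp_ineq1_le.
  rewrite <- (ln_exp (29/10)); apply ln_increasing; [lra |].
  rewrite E; apply Rlt_le_trans with ((1 + 29/100) ^ 10); [lra |].
  apply pow_incr; lra.
Qed.

Lemma pow_incr_inv (x y : R) (n : nat) : 0 <= y -> x ^ S n <= y ^ S n -> x <= y.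
Proof.
  intros Hy Hn; destruct (Rle_lt_dec x y) as [| Hyx]; [assumption | exfalso].
  assert (Hlt : y ^ S n < x ^ S n).
  { simpl; apply Rle_lt_trans with (y * x ^ n).
    - apply Rmult_le_compat_l, pow_incr; lra.
    - apply Rmult_lt_compat_r, Hyx; apply pow_lt; lra. }
  lra.
Qed.

Lemma Rpower_sixth_le (X p : R) : 0 <= X -> Rpower X (1/6) <= p -> 0 < p /\ X <= p ^ 6.
Proof.
  intros HX Hp.
  assert (Hpos : 0 < Rpower X (1/6)) by apply exp_pos.
  split; [lra |].
  destruct HX as [HX | <-]; [| apply pow_le; lra].
  replace X with (Rpower X (1/6) ^ 6).
  - apply pow_incr; lra.
  - rewrite <- Rpower_pow, Rpower_mult by exact Hpos.
    replace (1/6 * INR 6) with 1 by (simpl; field).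
    now apply Rpower_1.
Qed.

Lemma coeff_bounds (A B : Z) (p : R) :
  Rpower (IZR (Z.max (Z.abs A ^ 3) (Z.abs B ^ 2))) (1/6) <= p ->
  0 < p /\ Rabs (IZR A) <= p ^ 2 /\ Rabs (IZR B) <= p ^ 3.
Proof.
  intros Hp.
  assert (HX : 0 <= IZR (Z.max (Z.abs A ^ 3) (Z.abs B ^ 2))) by (apply IZR_le; lia).
  destruct (Rpower_sixth_le _ _ HX Hp) as [Hp0 Hp6].
  assert (HA : Rabs (IZR A) ^ 3 <= (p ^ 2) ^ 3).
  { rewrite <- pow_mult, Rabs_Zabs, pow_IZR; simpl.
    apply Rle_trans with (2 := Hp6), IZR_le; lia. }
  assert (HB : Rabs (IZR B) ^ 2 <= (p ^ 3) ^ 2).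
  { rewrite <- pow_mult, Rabs_Zabs, pow_IZR; simpl.
    apply Rle_trans with (2 := Hp6), IZR_le; lia. }
  repeat split; [assumption | |];
    eapply pow_incr_inv; try eassumption; apply pow_le; lra.
Qed.

Lemma on_curve_Q2R (A B : Z) (x y : Q) :
  on_curve A B (Aff x y) -> Q2R y ^ 2 = Q2R x ^ 3 + IZR A * Q2R x + IZR B.
Proof.
  intros H; apply Qeq_eqR in H.
  rewrite Q2R_sqr, !Q2R_plus, !Q2R_mult, !Q2R_inject_Z in H.
  rewrite H, RMicromega.Q2RpowerRZ by (right; discriminate); simpl; ring.
Qed.

Definition chord_x (xP yP xQ yQ : Q) : Q := ((yQ - yP) / (xQ - xP)) ^ 2 - xP - xQ.

Lemma hpt_add_distinct (A : Z) (xP yP xQ yQ : Q) :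
  ~ xP == xQ -> hpt (pt_add A (Aff xP yP) (Aff xQ yQ)) = hQ (chord_x xP yP xQ yQ).
Proof.
  intros Hne; simpl; destruct (Qeq_bool xP xQ) eqn:E; [| reflexivity].
  now apply Qeq_bool_eq in E.
Qed.

Lemma chord_x_identity (a b p q u v : R) :
  p <> q -> u ^ 2 = p ^ 3 + a * p + b -> v ^ 2 = q ^ 3 + a * q + b ->
  (((v - u) / (q - p)) ^ 2 - p - q) * (q - p) ^ 2
  = (p * q + a) * (p + q) + 2 * b - 2 * u * v.
Proof.
  intros Hpq Hu Hv.
  replace ((((v - u) / (q - p)) ^ 2 - p - q) * (q - p) ^ 2)
    with (v ^ 2 + u ^ 2 - 2 * u * v - (p + q) * (q - p) ^ 2) by (field; lra).
  rewrite Hu, Hv; ring.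
Qed.

Lemma Q2R_chord_x (A B : Z) (xP yP xQ yQ : Q) :
  on_curve A B (Aff xP yP) -> on_curve A B (Aff xQ yQ) -> Q2R xP <> Q2R xQ ->
  Q2R (chord_x xP yP xQ yQ) * (Q2R xQ - Q2R xP) ^ 2
  = (Q2R xP * Q2R xQ + IZR A) * (Q2R xP + Q2R xQ) + 2 * IZR B
    - 2 * Q2R yP * Q2R yQ.
Proof.
  intros HP HQ Hne.
  assert (Hd : ~ xQ - xP == 0).
  { intros E; apply Qeq_eqR in E; rewrite Q2R_minus, RMicromega.Q2R_0 in E; lra. }
  unfold chord_x; rewrite !Q2R_minus, Q2R_sqr, Q2R_div, !Q2R_minus by exact Hd.
  apply chord_x_identity; [exact Hne | |]; now apply on_curve_Q2R.
Qed.

Lemma chord_numerator_bound (a b p q u v : R) :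
  0 < p < q -> Rabs a <= p ^ 2 -> Rabs b <= p ^ 3 ->
  u ^ 2 = p ^ 3 + a * p + b -> v ^ 2 = q ^ 3 + a * q + b ->
  Rabs ((p * q + a) * (p + q) + 2 * b - 2 * u * v) <= 12 * p * q ^ 2.
Proof.
  intros Hpq Ha Hb Hu Hv.
  apply Rabs_le_inv in Ha; apply Rabs_le_inv in Hb.
  assert (Huv : Rabs (u * v) <= 3 * p * q ^ 2).
  { apply (pow_incr_inv _ _ 1); [nra |].
    rewrite pow2_abs, Rpow_mult_distr.
    assert (p ^ 2 <= q ^ 2 /\ p ^ 3 <= q ^ 3) as [Hp2 Hp3]
      by (split; apply pow_incr; lra).
    assert (Hfp : 0 <= u ^ 2 <= 3 * p ^ 3)
      by (split; [apply pow2_ge_0 | rewrite Hu; nra]).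
    assert (Hfq : 0 <= v ^ 2 <= 3 * q ^ 3)
      by (split; [apply pow2_ge_0 | rewrite Hv; nra]).
    assert (u ^ 2 * v ^ 2 <= 3 * p ^ 3 * (3 * q ^ 3))
      by (apply Rmult_le_compat; lra).
    assert (p ^ 3 * q ^ 3 <= p ^ 2 * q ^ 4) by nra.
    nra. }
  apply Rabs_le_inv in Huv.
  assert (Hpqa : 0 <= p * q + a <= 2 * p * q) by nra.
  assert (0 <= (p * q + a) * (p + q) <= 2 * p * q * (2 * q)) by nra.
  assert (p ^ 3 <= p * q ^ 2) by nra.
  apply Rabs_le; nra.
Qed.

Lemma y_product_integral (A B : Z) (xP yP xQ yQ : Q) (x1 x2 s : Z) :
  on_curve A B (Aff xP yP) -> on_curve A B (Aff xQ yQ) ->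
  Q2R xP * IZR s = IZR x1 -> Q2R xQ * IZR s = IZR x2 ->
  exists m : Z, Q2R yP * Q2R yQ * IZR s ^ 3 = IZR m.
Proof.
  intros HP HQ Hx1 Hx2.
  apply on_curve_Q2R in HP; apply on_curve_Q2R in HQ.
  destruct (Qsquare_integral (yP * yQ * inject_Z (s * s * s))
              ((x1 * x1 * x1 + A * x1 * s * s + B * s * s * s)
               * (x2 * x2 * x2 + A * x2 * s * s + B * s * s * s))) as [m Hm].
  - apply eqR_Qeq; rewrite !Q2R_mult, !Q2R_inject_Z.
    repeat rewrite ?mult_IZR, ?plus_IZR; rewrite <- Hx1, <- Hx2.
    transitivity (Q2R yP ^ 2 * Q2R yQ ^ 2 * IZR s ^ 6); [ring |].
    rewrite HP, HQ; ring.
  - exists m; apply Qeq_eqR in Hm.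
    rewrite !Q2R_mult, !Q2R_inject_Z, !mult_IZR in Hm; rewrite <- Hm; ring.
Qed.

Lemma hQ_le_ln_frac (q : Q) (N D : Z) (c : R) :
  (0 < D)%Z -> Q2R q * IZR D = IZR N -> Rabs (IZR N) <= c -> IZR D <= c ->
  hQ q <= ln c.
Proof.
  intros HD Hq HN HDc.
  assert (Hfrac : q * inject_Z D == inject_Z N)
    by (apply eqR_Qeq; now rewrite Q2R_mult, !Q2R_inject_Z).
  rewrite hQ_qheight; apply ln_le.
  - apply IZR_lt; pose proof (one_le_qheight q); lia.
  - apply Rle_trans with (IZR (Z.max (Z.abs N) D)).
    + now apply IZR_le, qheight_le_frac.
    + apply Z.max_case; [rewrite abs_IZR |]; assumption.
Qed.

Lemma hQ_chord_x_le (A B : Z) (xP yP xQ yQ : Q) (x1 x2 s : Z) (h1 h2 : R) :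
  on_curve A B (Aff xP yP) -> on_curve A B (Aff xQ yQ) -> (0 < s)%Z ->
  Q2R xP * IZR s = IZR x1 -> Q2R xQ * IZR s = IZR x2 ->
  0 < Q2R xP < Q2R xQ -> Rabs (IZR A) <= Q2R xP ^ 2 -> Rabs (IZR B) <= Q2R xP ^ 3 ->
  1 <= h1 -> Q2R xP <= h1 -> Q2R xQ <= h2 ->
  hQ (chord_x xP yP xQ yQ) <= ln (IZR s ^ 3 * (12 * (h1 * h2 ^ 2))).
Proof.
  intros HP HQ Hs Hx1 Hx2 Hpq HA HB Hh1 Hph1 Hqh2.
  destruct (y_product_integral A B xP yP xQ yQ x1 x2 s HP HQ Hx1 Hx2) as [m Hm].
  pose proof (Q2R_chord_x A B xP yP xQ yQ HP HQ ltac:(lra)) as Hx3.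
  pose proof (chord_numerator_bound (IZR A) (IZR B) _ _ _ _ Hpq HA HB
                (on_curve_Q2R _ _ _ _ HP) (on_curve_Q2R _ _ _ _ HQ)) as HE.
  set (p := Q2R xP) in *; set (q := Q2R xQ) in *.
  set (E := (p * q + IZR A) * (p + q) + 2 * IZR B - 2 * Q2R yP * Q2R yQ) in *.
  assert (HS : 0 < IZR s ^ 3) by (apply pow_lt, IZR_lt; lia).
  assert (Hq2 : q ^ 2 <= h2 ^ 2) by (apply pow_incr; lra).
  assert (Hpq2 : p * q ^ 2 <= h1 * h2 ^ 2) by (apply Rmult_le_compat; nra).
  assert (Hx12 : (x1 < x2)%Z).
  { apply lt_IZR; rewrite <- Hx1, <- Hx2.
    apply Rmult_lt_compat_r; [apply IZR_lt; lia | lra]. }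
  apply (hQ_le_ln_frac _
           ((x1 * x2 + A * s * s) * (x1 + x2) + 2 * B * s * s * s - 2 * m)
           (s * (x2 - x1) * (x2 - x1)));
    [apply Z.mul_pos_pos; [apply Z.mul_pos_pos |]; lia | | |];
    repeat rewrite ?mult_IZR, ?plus_IZR, ?minus_IZR;
    rewrite <- Hx1, <- Hx2; try rewrite <- Hm.
  - transitivity (IZR s ^ 3 * (Q2R (chord_x xP yP xQ yQ) * (q - p) ^ 2));
      [ring | rewrite Hx3; unfold E; ring].
  - match goal with
      |- Rabs ?N <= _ => replace N with (IZR s ^ 3 * E) by (unfold E; ring)
    end.
    rewrite Rabs_mult, Rabs_pos_eq by lra.
    apply Rmult_le_compat_l; [lra | nra].
  - replace (IZR s * _ * _) with (IZR s ^ 3 * (q - p) ^ 2) by ring.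
    apply Rmult_le_compat_l; [lra | nra].
Qed.

Theorem corollary3p4
  (a1 a2 a3 a4 a6 : Z) (Hmin : global_minimal a1 a2 a3 a4 a6)
  (xP yP xQ yQ : Q) (x1 x2 s : Z)
  (HP : on_curve (shortA a1 a2 a3 a4 a6) (shortB a1 a2 a3 a4 a6) (Aff xP yP))
  (HQ : on_curve (shortA a1 a2 a3 a4 a6) (shortB a1 a2 a3 a4 a6) (Aff xQ yQ))
  (Hs : (0 < s)%Z)
  (HxP : Q2R xP = (IZR x1 / IZR s)%R)
  (HxQ : Q2R xQ = (IZR x2 / IZR s)%R)
  (Hlow : (Rpower (IZR (Z.max (Z.abs (shortA a1 a2 a3 a4 a6) ^ 3)
                              (Z.abs (shortB a1 a2 a3 a4 a6) ^ 2))) (1/6)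
           <= Q2R xP)%R)
  (Hlt : (Q2R xP < Q2R xQ)%R) :
  (hpt (pt_add (shortA a1 a2 a3 a4 a6) (Aff xP yP) (Aff xQ yQ))
   <= hpt (Aff xP yP) + 2 * hpt (Aff xQ yQ) + 3 * ln (IZR s) + 29/10)%R.
Proof.
  set (A := shortA a1 a2 a3 a4 a6) in *; set (B := shortB a1 a2 a3 a4 a6) in *.
  clearbody A B; clear Hmin.
  destruct (coeff_bounds A B _ Hlow) as (Hp & HA & HB).
  assert (HS : 0 < IZR s) by (apply IZR_lt; lia).
  assert (Hx1 : Q2R xP * IZR s = IZR x1) by (rewrite HxP; field; lra).
  assert (Hx2 : Q2R xQ * IZR s = IZR x2) by (rewrite HxQ; field; lra).
  rewrite hpt_add_distinct by (intros E; apply Qeq_eqR in E; lra).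
  pose proof (Rle_trans _ _ _ (Rle_abs _) (Rabs_le_qheight xP)) as H1.
  pose proof (Rle_trans _ _ _ (Rle_abs _) (Rabs_le_qheight xQ)) as H2.
  pose proof (IZR_le _ _ (one_le_qheight xP)) as H1pos.
  pose proof (IZR_le _ _ (one_le_qheight xQ)) as H2pos.
  eapply Rle_trans.
  { exact (hQ_chord_x_le A B xP yP xQ yQ x1 x2 s _ _ HP HQ Hs Hx1 Hx2
             (conj Hp Hlt) HA HB H1pos H1 H2). }
  cbn [hpt]; rewrite !hQ_qheight.
  rewrite !ln_mult, !ln_pow by (repeat apply Rmult_lt_0_compat; try apply pow_lt; lra).
  pose proof ln_12_lt; simpl INR; lra.
Qed.
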